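(* Let $A,B,C\in\mathbb{R}^2$ be three vectors of equal (nonzero) length that are not all contained in a closed half-plane bounded by a line through the origin (when their tails are placed at the origin). Then there is an ordering $(v_1,v_2,v_3)$ of $A,B,C$ such that, placed tip-to-tail, the third vector meets the first. Precisely, the segment $[v_1+v_2,\,v_1+v_2+v_3]$ intersects the segment $[0,v_1]$: either the two segments cross, or the three vectors form a closed loop ($v_1+v_2+v_3=0$). *)

From HB Require Import structures.
From mathcomp Require Import all_boot all_order all_algebra.
Set Implicit Arguments. Unset Strict Implicit. Unset Printing Implicit Defensive.
Import Order.TTheory GRing.Theory Num.Theory.
Local Open Scope ring_scope.

Definition dot2 {R : rcfType} (u v : 'rV[R]_2) : R :=
  u 0 0 * v 0 0 + u 0 1 * v 0 1.
Definition len2 {R : rcfType} (u : 'rV[R]_2) : R := Num.sqrt (dot2 u u).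

(* u lies in the closed half-plane {x | n . x >= 0} bounded by the line
   through the origin orthogonal to the nonzero normal n *)
Definition in_closed_halfplane {R : rcfType} (n u : 'rV[R]_2) : Prop :=
  0 <= dot2 n u.

Definition segment2 {R : rcfType} (p q : 'rV[R]_2) : 'rV[R]_2 -> Prop :=
  fun x => exists2 t : R, 0 <= t <= 1 & x = p + t *: (q - p).

Definition segments_meet {R : rcfType} (p q p' q' : 'rV[R]_2) : Prop :=
  exists x, segment2 p q x /\ segment2 p' q' x.

From HB Require Import structures.
From mathcomp Require Import all_boot all_order all_algebra.
From mathcomp Require Import ring lra.
Import Order.TTheory GRing.Theory Num.Theory.
Local Open Scope ring_scope.

(* Not lying in any closed half-plane through the origin forces the origin to
   be a strictly positive combination a A + b B + c C = 0: the coefficients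
   are the cross products (B x C, C x A, A x B), whose signs are pinned down by
   testing the half-planes with normals +-A^perp and +-B^perp.  Putting the
   vector with the largest coefficient b in the middle, v1 + v2 + (c/b) v3 =
   (1 - a/b) v1 lies on both segments. *)

Lemma ord2_cases (j : 'I_2) : j = 0 \/ j = 1.
Proof. by case: j => -[|[|//]] lt; [left|right]; apply: val_inj. Qed.

Lemma rV2P (T : Type) (u v : 'rV[T]_2) : u 0 0 = v 0 0 -> u 0 1 = v 0 1 -> u = v.
Proof.
by move=> e0 e1; apply/matrixP => i j; rewrite ord1; case: (ord2_cases j) => ->.
Qed.

Section Plane.
Context {R : rcfType}.
Implicit Types (u v w x n : 'rV[R]_2) (a b c : R).

Definition cross2 u v : R := u 0 0 * v 0 1 - u 0 1 * v 0 0.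

Definition perp2 u : 'rV[R]_2 := \row_(j < 2) (if j == 0 then - u 0 1 else u 0 0).

Lemma dot2_oppl n x : dot2 (- n) x = - dot2 n x.
Proof. rewrite /dot2 !mxE; ring. Qed.

Lemma dot2_perp2 u x : dot2 (perp2 u) x = cross2 u x.
Proof. rewrite /dot2 /cross2 !mxE /=; ring. Qed.

Lemma cross2_antisym u v : cross2 v u = - cross2 u v.
Proof. rewrite /cross2; ring. Qed.

Lemma cross2_self u : cross2 u u = 0.
Proof. rewrite /cross2; ring. Qed.

Lemma perp2_eq0 u : (perp2 u == 0) = (u == 0).
Proof.
apply/eqP/eqP => [e|->]; last by apply: rV2P; rewrite !mxE /= ?oppr0.
move/rowP: e => e; have /eqP := e 0; have /eqP := e 1.
by rewrite !mxE /= oppr_eq0 => /eqP e0 /eqP e1; apply: rV2P; rewrite mxE.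
Qed.

Lemma len2_0 : len2 (0 : 'rV[R]_2) = 0.
Proof. by rewrite /len2 /dot2 !mxE mulr0 addr0 sqrtr0. Qed.

Lemma cross2_combination u v w :
  cross2 v w *: u + cross2 w u *: v + cross2 u v *: w = 0.
Proof. apply: rV2P; rewrite !mxE /cross2; ring. Qed.

Definition halfplane_free u v w :=
  ~ exists n, n != 0 /\ in_closed_halfplane n u /\ in_closed_halfplane n v /\
                 in_closed_halfplane n w.

Lemma halfplane_free_rot u v w : halfplane_free u v w -> halfplane_free v w u.
Proof. by move=> free [n [n0 [hv [hw hu]]]]; apply: free; exists n. Qed.

Lemma cross2_opposite_signs u v w :
  u != 0 -> halfplane_free u v w -> 0 < cross2 u v * cross2 w u.
Proof.
move=> u0 free; have pu0 : perp2 u != 0 by rewrite perp2_eq0.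
have not_both_ge0 : ~ (0 <= cross2 u v /\ 0 <= cross2 u w).
  move=> [hv hw]; apply: free; exists (perp2 u).
  by rewrite /in_closed_halfplane !dot2_perp2 cross2_self.
have not_both_le0 : ~ (cross2 u v <= 0 /\ cross2 u w <= 0).
  move=> [hv hw]; apply: free; exists (- perp2 u).
  rewrite oppr_eq0 /in_closed_halfplane !dot2_oppl !dot2_perp2 cross2_self.
  by rewrite !oppr_ge0 ?oppr0.
rewrite [cross2 w u]cross2_antisym.
have : (0 < cross2 u v /\ cross2 u w < 0) \/ (cross2 u v < 0 /\ 0 < cross2 u w) by lra.
case=> -[s0 t0]; first by rewrite mulr_gt0 ?oppr_gt0.
by rewrite mulrN -mulNr mulr_gt0 ?oppr_gt0.
Qed.

Lemma halfplane_free_pos_combination u v w :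
  u != 0 -> v != 0 -> halfplane_free u v w ->
  exists a b c, [/\ 0 < a, 0 < b, 0 < c & a *: u + b *: v + c *: w = 0].
Proof.
move=> u0 v0 free.
have pr : 0 < cross2 u v * cross2 w u by apply: cross2_opposite_signs.
have qp : 0 < cross2 v w * cross2 u v.
  by apply: cross2_opposite_signs; last exact: halfplane_free_rot.
set p := cross2 u v in pr qp.
have p0 : p != 0 by apply: contraTneq pr => ->; rewrite mul0r ltxx.
exists (p * cross2 v w), (p * cross2 w u), (p * p); split.
- by rewrite mulrC.
- exact: pr.
- by rewrite -expr2 exprn_even_gt0 // p0 orbT.
- by rewrite -!scalerA -!scalerDr cross2_combination scaler0.
Qed.

Lemma segments_meet_of_combination a b c u v w :
  0 < a -> a <= b -> 0 < c -> c <= b -> a *: u + b *: v + c *: w = 0 ->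
  segments_meet (u + v) (u + v + w) 0 u.
Proof.
move=> a0 ab c0 cb comb; have b0 : 0 < b := lt_le_trans a0 ab.
have b_neq0 : b != 0 by rewrite gt_eqF.
have ratio01 (t : R) : 0 < t -> t <= b -> 0 <= t / b <= 1.
  by move=> t0 tb; rewrite ler_pdivrMr // mul1r tb divr_ge0 // ltW.
exists ((1 - a / b) *: u); split.
- exists (c / b); first exact: ratio01.
  apply/esym/subr0_eq.
  have -> : u + v + c / b *: (u + v + w - (u + v)) - (1 - a / b) *: u =
            b^-1 *: (a *: u + b *: v + c *: w).
    by apply: rV2P; rewrite !mxE; field.
  by rewrite comb scaler0.
- exists (1 - a / b); last by rewrite subr0 add0r.
  by move: (ratio01 a a0 ab) => /andP[? ?]; apply/andP; split; lra.
Qed.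

Lemma tip_to_tail_meet a b c u v w :
  0 < a -> 0 < b -> 0 < c -> a *: u + b *: v + c *: w = 0 ->
  exists v1 v2 v3, perm_eq [:: v1; v2; v3] [:: u; v; w] /\
    segments_meet (v1 + v2) (v1 + v2 + v3) 0 v1.
Proof.
move=> a0 b0 c0 comb.
have comb_uwv : a *: u + c *: w + b *: v = 0 by rewrite addrAC.
have comb_vuw : b *: v + a *: u + c *: w = 0 by rewrite (addrC (b *: v)).
have perm_uwv : perm_eq [:: u; w; v] [:: u; v; w].
  by rewrite perm_cons (perm_catC [:: w] [:: v]).
have perm_vuw : perm_eq [:: v; u; w] [:: u; v; w].
  by rewrite (perm_catCA [:: v] [:: u] [:: w]).
have [ab|ba] := lerP a b; last have [ca|ac] := lerP c a.
- have [cb|bc] := lerP c b.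
    by exists u, v, w; split; last exact: (segments_meet_of_combination a b c).
  exists u, w, v; split => //.
  by apply: (segments_meet_of_combination a c b) => //; lra.
- exists v, u, w; split => //.
  by apply: (segments_meet_of_combination b a c) => //; lra.
- exists u, w, v; split => //.
  by apply: (segments_meet_of_combination a c b) => //; lra.
Qed.

End Plane.

Theorem lemma2p3 (R : rcfType) (A B C : 'rV[R]_2) :
  len2 A != 0 -> len2 A = len2 B -> len2 B = len2 C ->
  ~ (exists n : 'rV[R]_2, n != 0 /\
       in_closed_halfplane n A /\ in_closed_halfplane n B /\
       in_closed_halfplane n C) ->
  exists v1 v2 v3 : 'rV[R]_2,
    perm_eq [:: v1; v2; v3] [:: A; B; C] /\
    segments_meet (v1 + v2) (v1 + v2 + v3) 0 v1.
Proof.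
move=> lenA lenAB _ free.
have A0 : A != 0 by apply: contraNneq lenA => ->; rewrite len2_0.
have B0 : B != 0 by apply: contraNneq lenA => B0; rewrite lenAB B0 len2_0.
have [a [b [c [a0 b0 c0 comb]]]] :=
  halfplane_free_pos_combination A B C A0 B0 free.
exact: (tip_to_tail_meet a b c A B C a0 b0 c0 comb).
Qed.
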